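(* Let $\mathcal{R},\mathcal{V},\mathcal{R}',\mathcal{V}'$ be finite sets with $|\mathcal{R}|=|\mathcal{R}'|$. For any positive integer $k$ and any deterministic privacy mechanism $\Delta=(\mathcal{R},\mathcal{V},\mathcal{R}',\mathcal{V}',\Pi,\Delta)$: $\Delta$ is a $k$-anonymization if and only if $\Delta$ is a $Pk$-anonymization.
   Context: A table on $(\mathcal{R},\mathcal{V})$ is a map $\mathcal{R}\to\mathcal{V}$; $\mathcal{T}$, $\mathcal{T}'$ denote the sets of tables on $(\mathcal{R},\mathcal{V})$ and $(\mathcal{R}',\mathcal{V}')$. For sets $X,Y$, $X\to Y$ is the set of maps $X\to Y$. A privacy mechanism is $(\mathcal{R},\mathcal{V},\mathcal{R}',\mathcal{V}',\Pi,\Delta)$ with $\Pi$ uniformly distributed over bijections $\mathcal{R}\to\mathcal{R}'$ and $\Delta$ a random variable in $\mathcal{T}\to(\mathcal{R}\to\mathcal{V}')$; it is a privacy mechanism from $T$ to $T'$ (random variables on $\mathcal{T},\mathcal{T}'$) if $T,\Pi,\Delta$ are mutually independent and $\Delta(T)=T'\circ\Pi$. It is deterministic if for each $\tau\in\mathcal{T}$ there is a unique table $\hat\tau$ with $\Delta(\tau)=\hat\tau$ (with probability one). $\tau'$ is $k$-anonymous if for every $r'\in\mathcal{R}'$ there are at least $k$ elements $\hat r'\in\mathcal{R}'$ with $\tau'(\hat r')=\tau'(r')$. $(\Delta,\tau')$ is $Pk$-anonymous if for all random variables $T,T'$ such that $\Delta$ is a privacy mechanism from $T$ to $T'$ and all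 $r\in\mathcal{R}$, $r'\in\mathcal{R}'$, $\Pr[\Pi(r)=r'\mid T'=\tau']\le1/k$. Call $\tau'\in\mathcal{T}'$ attainable if some $\tau\in\mathcal{T}$ has $\Pr[\Delta(\tau)=\tau'\circ\Pi]\neq0$. $\Delta$ is a $Pk$-anonymization if $(\Delta,\tau')$ is $Pk$-anonymous for every attainable $\tau'$, and a $k$-anonymization if every attainable $\tau'$ is $k$-anonymous. *)

From HB Require Import structures.
From mathcomp Require Import all_boot all_order all_algebra.
From mathcomp Require Import all_classical all_reals all_analysis.
Set Implicit Arguments. Unset Strict Implicit. Unset Printing Implicit Defensive.
Import Order.TTheory GRing.Theory Num.Theory.
Local Open Scope classical_set_scope.
Local Open Scope ring_scope.

Section PrivacyDefs.
Context {R : realType} {d : measure_display} {Omega : measurableType d}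
        (P : probability Omega R).

Definition pr (A : set Omega) : R := fine (P A).

(* conditional probability Pr[A | B]; by MathComp's x / 0 = 0 convention it
   is 0 when Pr[B] = 0 *)
Definition condpr (A B : set Omega) : R := pr (A `&` B) / pr B.

Definition finrv (A : finType) (X : Omega -> A) :=
  forall a : A, measurable (X @^-1` [set a]).

Definition mutually_independent3 (A B C : finType)
    (X : Omega -> A) (Y : Omega -> B) (Z : Omega -> C) :=
  forall (SA : {set A}) (SB : {set B}) (SC : {set C}),
    P ([set w | X w \in SA] `&` [set w | Y w \in SB] `&` [set w | Z w \in SC])
    = (P [set w | X w \in SA] * P [set w | Y w \in SB]
       * P [set w | Z w \in SC])%E.

Variables (Rr Vv Rr' Vv' : finType).

(* tables on (Rr,Vv) are {ffun Rr -> Vv}; tables on (Rr',Vv') are {ffun Rr' -> Vv'} *)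

Definition bijections : {set {ffun Rr -> Rr'}} :=
  [set f : {ffun Rr -> Rr'} | injectiveb f && [forall y, exists x, f x == y]].

Variables (Pi : Omega -> {ffun Rr -> Rr'})
          (Delta : Omega -> {ffun {ffun Rr -> Vv} -> {ffun Rr -> Vv'}}).

Definition privacy_mechanism :=
  [/\ finrv Pi, finrv Delta &
      forall f : {ffun Rr -> Rr'},
        P [set w | Pi w = f] =
        (if f \in bijections then (#|bijections|%:R^-1)%:E else 0)%E].

Definition mechanism_from (T : Omega -> {ffun Rr -> Vv})
    (T' : Omega -> {ffun Rr' -> Vv'}) :=
  [/\ finrv T, finrv T', mutually_independent3 T Pi Delta &
      P [set w | Delta w (T w) <> [ffun r => T' w (Pi w r)]] = 0%E].

Definition deterministic :=
  forall tau : {ffun Rr -> Vv},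
    exists! tauhat : {ffun Rr -> Vv'}, P [set w | Delta w tau = tauhat] = 1%E.

Definition k_anonymous (k : nat) (tau' : {ffun Rr' -> Vv'}) :=
  forall r' : Rr', (k <= #|[set r'' | tau' r'' == tau' r']|)%N.

Definition Pk_anonymous (k : nat) (tau' : {ffun Rr' -> Vv'}) :=
  forall (T : Omega -> {ffun Rr -> Vv}) (T' : Omega -> {ffun Rr' -> Vv'}),
    mechanism_from T T' ->
    forall (r : Rr) (r' : Rr'),
      condpr [set w | Pi w r = r'] [set w | T' w = tau'] <= (k%:R)^-1.

Definition attainable (tau' : {ffun Rr' -> Vv'}) :=
  exists tau : {ffun Rr -> Vv},
    P [set w | Delta w tau = [ffun r => tau' (Pi w r)]] <> 0%E.

Definition k_anonymization (k : nat) :=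
  forall tau', attainable tau' -> k_anonymous k tau'.

Definition Pk_anonymization (k : nat) :=
  forall tau', attainable tau' -> Pk_anonymous k tau'.

End PrivacyDefs.

(* A deterministic mechanism publishes [h tau] with its records relabelled by a
   uniformly random bijection [Pi].  For any input distribution,
   Pr[Pi r = r' | T' = tau'] is the ratio of two averages over the inputs [tau]:
   of the number of bijections [f] with [h tau = tau' \o f] and [f r = r'], and of
   the number of all such bijections.  Composing with the transposition of two
   records of equal value shows that the first count does not depend on [r'] within
   a value class of [tau'], so it is at most 1/|class of r'| of the second, with
   equality as soon as it is nonzero.  Hence k-anonymity of [tau'] bounds the
   posterior by 1/k; conversely, a constant input attaining [tau'] makes the
   posterior exactly 1/|class of r'|. *)

From HB Require Import structures.
From mathcomp Require Import all_boot all_order all_algebra.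
From mathcomp Require Import all_classical all_reals all_analysis.
From mathcomp Require Import ring lra perm.
Set Implicit Arguments. Unset Strict Implicit. Unset Printing Implicit Defensive.
Import Order.TTheory GRing.Theory Num.Theory.
Local Open Scope classical_set_scope.
Local Open Scope ring_scope.

Section FiniteRandomVariables.
Context {R : realType} {d : measure_display} {Omega : measurableType d}
        (P : probability Omega R).

Lemma eq_pr (E1 E2 : set Omega) : (forall w, E1 w <-> E2 w) -> pr P E1 = pr P E2.
Proof. by move=> E12; congr (pr P _); apply/funext => w; apply/propext. Qed.

Lemma pr_ge0 E : 0 <= pr P E.
Proof. exact/fine_ge0/measure_ge0. Qed.

Lemma prE E : measurable E -> P E = (pr P E)%:E.
Proof. by move=> mE; rewrite /pr fineK // fin_num_measure. Qed.

Lemma pr_setT : pr P setT = 1.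
Proof. by rewrite /pr probability_setT. Qed.

Lemma pr_set0 : pr P set0 = 0.
Proof. by rewrite /pr measure0. Qed.

Lemma finrv_pair (A B : finType) (X : Omega -> A) (Y : Omega -> B) :
  finrv X -> finrv Y -> finrv (fun w => (X w, Y w)).
Proof.
move=> mX mY [a b]; have -> : (fun w => (X w, Y w)) @^-1` [set (a, b)] =
    X @^-1` [set a] `&` Y @^-1` [set b].
  by apply/seteqP; split=> w /=; [case=> -> -> | case=> -> ->].
exact: measurableI.
Qed.

Section OneVariable.
Variables (A : finType) (X : Omega -> A).
Hypothesis mX : finrv X.

Lemma finrv_measurable_mem (s : seq A) : measurable [set w | X w \in s].
Proof.
elim: s => [|a s IHs].
  by rewrite (_ : [set w | _] = set0) //; apply/seteqP; split=> w //=; rewrite in_nil.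
rewrite (_ : [set w | _] = X @^-1` [set a] `|` [set w | X w \in s]).
  exact: measurableU.
apply/seteqP; split=> w /=; rewrite in_cons; last by case=> [->|->]; rewrite ?eqxx ?orbT.
by case/orP=> [/eqP|]; [left | right].
Qed.

Lemma finrv_measurable (Q : pred A) : measurable [set w | Q (X w)].
Proof.
rewrite (_ : [set w | _] = [set w | X w \in [seq x <- index_enum A | Q x]]).
  exact: finrv_measurable_mem.
by apply/seteqP; split=> w /=; rewrite mem_filter mem_index_enum andbT.
Qed.

Lemma finrv_comp (B : finType) (f : A -> B) : finrv (fun w => f (X w)).
Proof.
move=> b; rewrite (_ : _ @^-1` _ = [set w | f (X w) == b]).
  exact: (finrv_measurable (fun x => f x == b)).
by apply/seteqP; split=> w /= /eqP.
Qed.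

Lemma pr_finrv_mem (s : seq A) : uniq s ->
  pr P [set w | X w \in s] = \sum_(x <- s) pr P [set w | X w = x].
Proof.
elim: s => [_|a s IHs /= /andP[a_s us]].
  by rewrite big_nil -pr_set0; apply: eq_pr => w; rewrite /= in_nil.
rewrite big_cons -IHs // (@eq_pr _ ([set w | X w = a] `|` [set w | X w \in s])); last first.
  move=> w /=; rewrite in_cons; split; last by case=> [->|->]; rewrite ?eqxx ?orbT.
  by case/orP=> [/eqP|]; [left | right].
have mXa : measurable [set w | X w = a] := mX a.
have mXs := finrv_measurable_mem s.
have disj : [set w | X w = a] `&` [set w | X w \in s] = set0.
  by apply/seteqP; split=> // w /= [Xa Xs]; rewrite -Xa Xs in a_s.
by rewrite /pr measureU ?fineD ?fin_num_measure.
Qed.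

Lemma pr_finrv (Q : pred A) (E : set Omega) : (forall w, E w <-> Q (X w)) ->
  pr P E = \sum_(x | Q x) pr P [set w | X w = x].
Proof.
move=> EQ; rewrite (@eq_pr _ [set w | X w \in [seq x <- index_enum A | Q x]]).
  by rewrite pr_finrv_mem ?filter_uniq ?index_enum_uniq // big_filter.
by move=> w; rewrite EQ /= mem_filter mem_index_enum andbT.
Qed.

Lemma pr_finrv_eq0 (Q : pred A) x E : Q x -> (forall w, E w <-> Q (X w)) ->
  pr P E = 0 -> pr P [set w | X w = x] = 0.
Proof.
move=> Qx EQ; rewrite (pr_finrv EQ) (bigD1 x) //= => /eqP.
by rewrite paddr_eq0 ?pr_ge0 ?sumr_ge0 // => [/andP[/eqP] | i _]; last exact: pr_ge0.
Qed.

Lemma pr_finrv_predC (Q : pred A) :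
  pr P [set w | Q (X w)] + pr P [set w | ~~ Q (X w)] = 1.
Proof.
rewrite -pr_setT (@pr_finrv predT setT) // (bigID Q) /=.
by rewrite -(@pr_finrv Q [set w | Q (X w)]) // -(@pr_finrv (predC Q) [set w | ~~ Q (X w)]).
Qed.

Lemma pr_finrv_neq a : pr P [set w | X w = a] = 1 -> pr P [set w | X w != a] = 0.
Proof.
have := pr_finrv_predC (pred1 a); rewrite (@eq_pr [set w | pred1 a (X w)] [set w | X w = a]).
  by move=> + Xa; rewrite Xa; lra.
by move=> w; split=> /eqP.
Qed.

Lemma eq_pr_finrv_on (supp Q1 Q2 : pred A) :
  (forall x, ~~ supp x -> pr P [set w | X w = x] = 0) ->
  {in supp, Q1 =1 Q2} ->
  pr P [set w | Q1 (X w)] = pr P [set w | Q2 (X w)].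
Proof.
move=> null Q12; rewrite (@pr_finrv Q1 [set w | Q1 (X w)]) // (@pr_finrv Q2 [set w | Q2 (X w)]) //.
rewrite [LHS](bigID supp) [RHS](bigID supp) /=.
rewrite [X in _ + X]big1 1?[X in _ = _ + X]big1 ?addr0 => [|x /andP[_]|x /andP[_]]; try exact: null.
by apply: eq_bigl => x; case: (boolP (supp x)) => [/Q12 ->|]; rewrite ?andbT ?andbF.
Qed.

End OneVariable.

Lemma pr_ffun_as (A B : finType) (D : Omega -> {ffun A -> B}) (g : A -> B) :
  finrv D -> (forall a, pr P [set w | D w a = g a] = 1) ->
  pr P [set w | D w = [ffun a => g a]] = 1.
Proof.
move=> mD Dg; have := pr_finrv_predC mD (pred1 [ffun a => g a]).
rewrite (@pr_finrv _ _ mD (predC1 [ffun a => g a]) [set w | ~~ pred1 _ (D w)]) //.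
rewrite big1 ?addr0.
  by move=> <-; apply: eq_pr => w; split=> /eqP.
move=> D0 /eqP D0g; have [a D0ag] : exists a, D0 a != g a.
  apply/existsP; apply: contraT; rewrite negb_exists => /forallP D0g'.
  by case: D0g; apply/ffunP => a; rewrite ffunE; apply/eqP/negPn/D0g'.
apply: (pr_finrv_eq0 mD (Q := fun D1 => D1 a != g a) D0ag (fun w => iff_refl _)).
exact/(pr_finrv_neq (finrv_comp mD (fun D1 => D1 a)))/Dg.
Qed.

Lemma mutually_independent3_const (A B C : finType) (a0 : A)
    (Y : Omega -> B) (Z : Omega -> C) c0 :
  finrv Y -> finrv Z -> pr P [set w | Z w = c0] = 1 ->
  mutually_independent3 P (fun _ => a0) Y Z.
Proof.
move=> mY mZ Zc0 SA SB SC; have mYZ := finrv_pair mY mZ.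
have null v : ~~ (v.2 == c0) -> pr P [set w | (Y w, Z w) = v] = 0.
  move=> vc0; apply: (pr_finrv_eq0 mYZ (Q := fun v => v.2 != c0) vc0 (fun w => iff_refl _)).
  exact: pr_finrv_neq.
have Z_c0 (Q : pred (B * C)) :
    pr P [set w | Q (Y w, Z w)] = pr P [set w | Q (Y w, c0)].
  by apply: (eq_pr_finrv_on mYZ (Q1 := Q) (Q2 := fun v => Q (v.1, c0)) null) => -[b c] /eqP /= ->.
have prC : pr P [set w | Z w \in SC] = if c0 \in SC then 1 else 0.
  rewrite (Z_c0 (fun v => v.2 \in SC)) -pr_setT -pr_set0.
  by case: (c0 \in SC); apply: eq_pr.
have prBC : pr P ([set w | Y w \in SB] `&` [set w | Z w \in SC]) =
    if c0 \in SC then pr P [set w | Y w \in SB] else 0.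
  pose BC v := (v.1 \in SB) && (v.2 \in SC).
  rewrite (@eq_pr _ [set w | BC (Y w, Z w)]); last first.
    by move=> w; rewrite /BC /=; split=> [[-> ->] | /andP[]].
  rewrite Z_c0 /BC -pr_set0; case: (c0 \in SC); apply: eq_pr => w /=.
    by rewrite andbT.
  by rewrite andbF.
have mB := finrv_measurable mY (fun b => b \in SB).
have mC := finrv_measurable mZ (fun c => c \in SC).
case: (a0 \in SA).
  have -> : [set _ : Omega | true] = setT by apply/seteqP; split.
  rewrite setTI probability_setT mul1e.
  rewrite !prE ?prBC ?prC //; last exact: measurableI.
  by case: (c0 \in SC); rewrite ?mule1 ?mule0.
have -> : [set _ : Omega | false] = set0 by apply/seteqP; split.
by rewrite !set0I measure0 !mul0e.
Qed.

Lemma sum_pr_const (A : finType) (a0 : A) (F : A -> R) :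
  \sum_a pr P [set w | a0 = a] * F a = F a0.
Proof.
rewrite (bigD1 a0) //= (@eq_pr _ setT) // pr_setT mul1r big1 ?addr0 // => a /negPf a0a.
by rewrite (@eq_pr _ set0) ?pr_set0 ?mul0r // => w; split=> //= a0E; rewrite a0E eqxx in a0a.
Qed.

End FiniteRandomVariables.

Section ConsistentBijections.
Local Close Scope classical_set_scope.
Variables (Rr Rr' Vv' : finType).

Definition consistent (th : {ffun Rr -> Vv'}) (tau' : {ffun Rr' -> Vv'}) :=
  [set f in bijections Rr Rr' | th == [ffun z => tau' (f z)]].

Definition consistent_at (th : {ffun Rr -> Vv'}) (tau' : {ffun Rr' -> Vv'}) r r' :=
  [set f in bijections Rr Rr' | (f r == r') && (th == [ffun z => tau' (f z)])].

Definition eq_class (tau' : {ffun Rr' -> Vv'}) r' := [set c | tau' c == tau' r'].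

Variables (th : {ffun Rr -> Vv'}) (tau' : {ffun Rr' -> Vv'}) (r : Rr).

Lemma consistent_at_tperm a b f : tau' a = tau' b ->
  f \in consistent_at th tau' r a -> [ffun x => tperm a b (f x)] \in consistent_at th tau' r b.
Proof.
move=> tau'ab; rewrite !inE => /and3P[/andP[/injectiveP f_inj /forallP f_surj] /eqP fr /eqP thf].
apply/and3P; split; [apply/andP; split | |].
- by apply/injectiveP => x y; rewrite !ffunE => /perm_inj /f_inj.
- apply/forallP => y; have /existsP[x /eqP fx] := f_surj (tperm a b y).
  by apply/existsP; exists x; rewrite ffunE fx tpermK.
- by rewrite ffunE fr tpermL.
rewrite thf; apply/eqP/ffunP => z; rewrite !ffunE.
by case: tpermP => [->|->|].
Qed.

Lemma card_consistent_at_class a b : tau' a = tau' b ->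
  #|consistent_at th tau' r a| = #|consistent_at th tau' r b|.
Proof.
have le_card a' b' : tau' a' = tau' b' ->
    (#|consistent_at th tau' r a'| <= #|consistent_at th tau' r b'|)%N.
  move=> tau'ab.
  have tperm_inj : injective (fun f : {ffun Rr -> Rr'} => [ffun x => tperm a' b' (f x)]).
    move=> f g /ffunP fg; apply/ffunP => x; have := fg x; rewrite !ffunE; exact: perm_inj.
  rewrite -(card_imset _ tperm_inj); apply/subset_leq_card/fintype.subsetP => _ /imsetP[f fa ->].
  exact: consistent_at_tperm.
by move=> tau'ab; apply/eqP; rewrite eqn_leq !le_card.
Qed.

Lemma card_consistent_class r' :
  #|[set f in consistent th tau' | tau' (f r) == tau' r']| =
  (#|eq_class tau' r'| * #|consistent_at th tau' r r'|)%N.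
Proof.
rewrite -sum1_card (partition_big (fun f : {ffun Rr -> Rr'} => f r) (mem (eq_class tau' r'))) /=;
  last by move=> f; rewrite !inE => /andP[].
rewrite -sum_nat_const; apply: eq_bigr => c; rewrite inE => /eqP tau'c.
rewrite sum1dep_card -(card_consistent_at_class tau'c); apply: eq_card => f.
rewrite !inE; case: (f r =P c) => [->|]; last by rewrite !andbF.
by rewrite tau'c eqxx !andbT.
Qed.

Lemma leq_card_consistent_at r' :
  (#|eq_class tau' r'| * #|consistent_at th tau' r r'| <= #|consistent th tau'|)%N.
Proof.
rewrite -card_consistent_class; apply/subset_leq_card/fintype.subsetP => f.
by rewrite inE => /andP[].
Qed.

Lemma card_consistent r' : th r = tau' r' ->
  #|consistent th tau'| = (#|eq_class tau' r'| * #|consistent_at th tau' r r'|)%N.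
Proof.
move=> thr; rewrite -card_consistent_class; apply: eq_card => f; rewrite inE.
case: (boolP (f \in consistent th tau')) => //=; rewrite inE => /andP[_ /eqP thf].
by rewrite -thr thf ffunE eqxx.
Qed.

End ConsistentBijections.

(* [k_anonymous] counts a classical set (a [Prop]-valued predicate); its
   cardinality is that of the finset [eq_class]. *)
Lemma card_eq_class (Rr' Vv' : finType) (tau' : {ffun Rr' -> Vv'}) r' :
  #|[set r'' | tau' r'' == tau' r']| = #|eq_class tau' r'|.
Proof.
apply: eq_card => c; rewrite /eq_class finset.inE.
by apply/idP/idP => [/set_mem //|]; exact: mem_set.
Qed.

Lemma ratio_sum_le_invn (R : realFieldType) (I : finType) (x y : I -> R) k :
  (0 < k)%N -> (forall i, 0 <= x i) -> (forall i, k%:R * x i <= y i) ->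
  (\sum_i x i) / (\sum_i y i) <= k%:R^-1.
Proof.
move=> k_gt0 x_ge0 kxy; have kR : 0 < (k%:R : R) by rewrite ltr0n.
have X_ge0 : 0 <= \sum_i x i by apply: sumr_ge0.
have kXY : k%:R * (\sum_i x i) <= \sum_i y i by rewrite mulr_sumr; apply: ler_sum.
have [->|Y_neq0] := eqVneq (\sum_i y i) 0; first by rewrite invr0 mulr0 invr_ge0 ler0n.
have Y_gt0 : 0 < \sum_i y i.
  by rewrite lt_def Y_neq0 /= (le_trans _ kXY) // mulr_ge0 // ltW.
by rewrite ler_pdivrMr // ler_pdivlMl.
Qed.

Definition transport (Rr Rr' V : finType) (t : {ffun Rr -> V}) (dflt : {ffun Rr' -> V})
    (g : {ffun Rr -> Rr'}) : {ffun Rr' -> V} :=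
  [ffun y => if [pick x | g x == y] is Some x then t x else dflt y].

Lemma transport_bij (Rr Rr' V : finType) (t : {ffun Rr -> V}) dflt g :
  g \in bijections Rr Rr' -> [ffun r => transport t dflt g (g r)] = t.
Proof.
rewrite finset.inE => /andP[/injectiveP g_inj _]; apply/ffunP => r; rewrite !ffunE.
by case: pickP => [x /eqP /g_inj -> | /(_ r)]; rewrite ?eqxx.
Qed.

Section DeterministicMechanism.
Context {R : realType} {d : measure_display} {Omega : measurableType d}
        (P : probability Omega R).
Variables (Rr Vv Rr' Vv' : finType) (Pi : Omega -> {ffun Rr -> Rr'})
  (Delta : Omega -> {ffun {ffun Rr -> Vv} -> {ffun Rr -> Vv'}})
  (h : {ffun Rr -> Vv} -> {ffun Rr -> Vv'}).
Hypothesis mechP : privacy_mechanism P Pi Delta.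
Hypothesis Delta_h : forall tau, P [set w | Delta w tau = h tau] = 1%E.

Let N : R := #|bijections Rr Rr'|%:R.
Let draw := ({ffun Rr -> Rr'} * {ffun {ffun Rr -> Vv} -> {ffun Rr -> Vv'}})%type.

Lemma finrv_Pi : finrv Pi. Proof. by case: mechP. Qed.

Lemma finrv_Delta : finrv Delta. Proof. by case: mechP. Qed.

Lemma pr_Pi f : pr P [set w | Pi w = f] = if f \in bijections Rr Rr' then N^-1 else 0.
Proof. by rewrite /pr; case: mechP => _ _ ->; case: ifP. Qed.

Lemma pr_Delta_neq tau : pr P [set w | Delta w tau != h tau] = 0.
Proof. by apply: (pr_finrv_neq (finrv_comp finrv_Delta (fun D => D tau))); rewrite /pr Delta_h. Qed.

Section MechanismFrom.
Variables (T : Omega -> {ffun Rr -> Vv}) (T' : Omega -> {ffun Rr' -> Vv'}).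
Hypothesis fromTT' : mechanism_from P Pi Delta T T'.

Let outcome := ({ffun Rr -> Vv} * {ffun Rr -> Rr'} *
  {ffun {ffun Rr -> Vv} -> {ffun Rr -> Vv'}} * {ffun Rr' -> Vv'})%type.
Let X w : outcome := (T w, Pi w, Delta w, T' w).

Definition admissible (x : outcome) := let: (tau, f, D, t') := x in
  [&& f \in bijections Rr Rr', D tau == h tau & D tau == [ffun r => t' (f r)]].

Lemma finrv_T : finrv T. Proof. by case: fromTT'. Qed.

Lemma finrv_X : finrv X.
Proof.
apply: finrv_pair; last by case: fromTT'.
exact/finrv_pair/finrv_Delta/finrv_pair/finrv_Pi/finrv_T.
Qed.

Lemma pr_inadmissible x : ~~ admissible x -> pr P [set w | X w = x] = 0.
Proof.
case: x => [[[tau f] D] t'] /=; case: (boolP (f \in _)) => [f_bij|f_nbij _] /=; last first.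
  apply: (pr_finrv_eq0 finrv_X (Q := fun y => y.1.1.2 == f) (E := [set w | Pi w = f])).
  - exact: eqxx.
  - by move=> w; split=> /eqP.
  - by rewrite pr_Pi (negbTE f_nbij).
case: (boolP (D tau == h tau)) => [_|Dtau _] /=; last first.
  apply: (pr_finrv_eq0 finrv_X (Q := fun y => y.1.2 tau != h tau) (x := (tau, f, D, t')) Dtau
    (E := [set w | Delta w tau != h tau])) => //.
  exact: pr_Delta_neq.
move=> DtauE; apply: (pr_finrv_eq0 finrv_X
  (Q := fun y => let: (tau, f, D, t') := y in D tau != [ffun r => t' (f r)])
  (x := (tau, f, D, t')) DtauE
  (E := [set w | Delta w (T w) <> [ffun r => T' w (Pi w r)]])).
  by move=> w /=; split=> /eqP.
by rewrite /pr; case: fromTT' => _ _ _ ->.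
Qed.

Lemma pr_T_Pi tau f : pr P [set w | (T w, Pi w) = (tau, f)] =
  pr P [set w | T w = tau] * pr P [set w | Pi w = f].
Proof.
pose all_D := [set: {ffun {ffun Rr -> Vv} -> {ffun Rr -> Vv'}}]%SET.
case: fromTT' => _ _ indep _; have := indep [set tau]%SET [set f]%SET all_D.
have mem_set1 (A : finType) (Y : Omega -> A) a :
    [set w | Y w \in [set a]%SET] = [set w | Y w = a].
  by apply/seteqP; split=> w /=; rewrite finset.inE => /eqP.
rewrite !mem_set1.
rewrite (_ : [set w | Delta w \in all_D] = setT); last first.
  by apply/seteqP; split=> w //=; rewrite /all_D finset.inE.
rewrite setIT probability_setT mule1 => {}indep.
rewrite (@eq_pr _ _ _ P _ ([set w | T w = tau] `&` [set w | Pi w = f])); last first.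
  by move=> w /=; split=> [[-> ->]|[-> ->]].
by rewrite /pr indep fineM ?fin_num_measure //; [exact: finrv_T | exact: finrv_Pi].
Qed.

Lemma pr_mechanism_event (Q : pred outcome)
    (S : {ffun Rr -> Vv} -> {ffun Rr -> Rr'} -> bool) (E : set Omega) :
  (forall w, E w <-> Q (X w)) ->
  (forall x, admissible x -> Q x = S x.1.1.1 x.1.1.2) ->
  pr P E = \sum_tau pr P [set w | T w = tau] *
             (#|[set f in bijections Rr Rr' | S tau f]|%:R / N).
Proof.
move=> EQ QS; rewrite (eq_pr P EQ) (eq_pr_finrv_on finrv_X pr_inadmissible QS) /=.
rewrite (@pr_finrv _ _ _ P _ _ (finrv_pair finrv_T finrv_Pi) (fun y => S y.1 y.2)) //.
transitivity (\sum_tau \sum_(f | S tau f) pr P [set w | (T w, Pi w) = (tau, f)]).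
  by rewrite pair_big_dep; apply: eq_bigr => -[].
apply: eq_bigr => tau _; under eq_bigr do rewrite pr_T_Pi pr_Pi.
rewrite -mulr_sumr -big_mkcondr /= sumr_const mulr_natl; congr (_ * (_ *+ _)).
by apply: eq_card => f; rewrite finset.inE andbC.
Qed.

Lemma admissible_tableE tau f D t' tau' : admissible (tau, f, D, t') ->
  (t' == tau') = (h tau == [ffun z => tau' (f z)]).
Proof.
case/and3P=> /[dup] f_bij; rewrite finset.inE => /andP[_ /forallP f_surj] /eqP <- /eqP ->.
apply/eqP/eqP => [->//|tau'f]; apply/ffunP => y.
have /existsP[z /eqP <-] := f_surj y.
by have := congr1 (fun g : {ffun Rr -> Vv'} => g z) tau'f; rewrite !ffunE.
Qed.

Lemma condpr_mechanism r r' tau' :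
  condpr P [set w | Pi w r = r'] [set w | T' w = tau'] =
  (\sum_tau pr P [set w | T w = tau] * (#|consistent_at (h tau) tau' r r'|%:R / N)) /
  (\sum_tau pr P [set w | T w = tau] * (#|consistent (h tau) tau'|%:R / N)).
Proof.
rewrite /condpr (@pr_mechanism_event (fun x => (x.1.1.2 r == r') && (x.2 == tau'))
  (fun tau f => (f r == r') && (h tau == [ffun z => tau' (f z)]))); first last.
- by case=> [[[tau f] D] t'] /= /admissible_tableE ->.
- by move=> w /=; split=> [[-> ->] | /andP[/eqP -> /eqP ->]]; rewrite ?eqxx.
rewrite (@pr_mechanism_event (fun x => x.2 == tau')
  (fun tau f => h tau == [ffun z => tau' (f z)])) //.
- by move=> w /=; split=> [-> | /eqP ->].
- by case=> [[[tau f] D] t'] /= /admissible_tableE ->.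
Qed.

End MechanismFrom.

Section ConstantInput.
Variables (tau0 : {ffun Rr -> Vv}) (tau' : {ffun Rr' -> Vv'}).

Lemma pr_Pi_Delta_atypical (v : draw) :
  ~~ ((v.1 \in bijections Rr Rr') && (v.2 tau0 == h tau0)) ->
  pr P [set w | (Pi w, Delta w) = v] = 0.
Proof.
have mPD := finrv_pair finrv_Pi finrv_Delta.
case/nandP => [v_nbij | vtau0].
  apply: (pr_finrv_eq0 mPD (Q := fun y => y.1 == v.1) (E := [set w | Pi w = v.1])) => //.
  - by move=> w; split=> /eqP.
  - by rewrite pr_Pi (negbTE v_nbij).
apply: (pr_finrv_eq0 mPD (Q := fun y => y.2 tau0 != h tau0) vtau0
  (E := [set w | Delta w tau0 != h tau0])) => //.
exact: pr_Delta_neq.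
Qed.

Lemma mechanism_from_const :
  mechanism_from P Pi Delta (fun _ => tau0) (fun w => transport (h tau0) tau' (Pi w)).
Proof.
have mPD := finrv_pair finrv_Pi finrv_Delta.
split; [exact: (finrv_comp finrv_Pi (fun _ => tau0)) |
        exact: (finrv_comp finrv_Pi (transport (h tau0) tau')) | |].
  apply: (mutually_independent3_const _ finrv_Pi finrv_Delta (c0 := [ffun tau => h tau])).
  by apply: pr_ffun_as finrv_Delta _ => tau; rewrite /pr Delta_h.
pose bad (v : draw) := v.2 tau0 != [ffun r => transport (h tau0) tau' v.1 (v.1 r)].
rewrite (_ : [set w | _] = [set w | bad (Pi w, Delta w)]); last by apply/seteqP; split=> w /= /eqP.
rewrite prE; last exact: finrv_measurable.
rewrite (eq_pr_finrv_on mPD pr_Pi_Delta_atypical (Q2 := pred0)).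
  by rewrite (@eq_pr _ _ _ P _ set0) ?pr_set0.
by case=> f D /andP[/= f_bij /eqP Dtau0]; rewrite /bad /= Dtau0 transport_bij ?eqxx.
Qed.

Lemma pr_attainable :
  pr P [set w | Delta w tau0 = [ffun r => tau' (Pi w r)]] =
  #|consistent (h tau0) tau'|%:R / N.
Proof.
rewrite (pr_mechanism_event mechanism_from_const
  (Q := fun x => x.1.2 x.1.1.1 == [ffun z => tau' (x.1.1.2 z)])
  (S := fun tau f => h tau == [ffun z => tau' (f z)])).
- exact: sum_pr_const.
- by move=> w /=; split=> /eqP.
- by case=> [[[tau f] D] t'] /and3P[_ /eqP /= -> _].
Qed.

Lemma consistent_of_attainable :
  P [set w | Delta w tau0 = [ffun r => tau' (Pi w r)]] <> 0%E ->
  exists f0, f0 \in consistent (h tau0) tau'.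
Proof.
move=> att; apply/card_gt0P; rewrite lt0n; apply: contra_notN att => /eqP cons0.
pose A (v : draw) := v.2 tau0 == [ffun r => tau' (v.1 r)].
rewrite prE ?pr_attainable ?cons0 ?mul0r //.
rewrite (_ : [set w | _] = [set w | A (Pi w, Delta w)]); last by apply/seteqP; split=> w /= /eqP.
exact: finrv_measurable (finrv_pair finrv_Pi finrv_Delta) A.
Qed.

End ConstantInput.

Variable k : nat.
Hypothesis k_gt0 : (0 < k)%N.

Lemma Pk_anonymization_of_k : k_anonymization P Pi Delta k -> Pk_anonymization P Pi Delta k.
Proof.
move=> kanon tau' att T T' fromTT' r r'.
have k_class : (k <= #|eq_class tau' r'|)%N by rewrite -card_eq_class; apply: kanon.
rewrite (condpr_mechanism fromTT'); apply: ratio_sum_le_invn => // tau.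
  by rewrite mulr_ge0 ?pr_ge0 ?divr_ge0.
rewrite mulrCA ler_wpM2l ?pr_ge0 // mulrA -natrM ler_wpM2r ?invr_ge0 // ler_nat.
exact: leq_trans (leq_mul k_class (leqnn _)) (leq_card_consistent_at _ _ r r').
Qed.

Lemma k_anonymization_of_Pk : Pk_anonymization P Pi Delta k -> k_anonymization P Pi Delta k.
Proof.
move=> Pkanon tau' [tau0 att] r'; rewrite card_eq_class.
have [f0 f0_cons] := consistent_of_attainable att.
move: (f0_cons); rewrite finset.inE => /andP[/[dup] f0_bij].
rewrite finset.inE => /andP[_ /forallP/(_ r')/existsP[r /eqP f0r]] /eqP h_f0.
have thr : h tau0 r = tau' r' by rewrite h_f0 ffunE f0r.
have F_gt0 : (0 < #|consistent_at (h tau0) tau' r r'|)%N.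
  by apply/card_gt0P; exists f0; rewrite finset.inE f0_bij f0r h_f0 !eqxx.
have N_gt0 : (0 < #|bijections Rr Rr'|)%N by apply/card_gt0P; exists f0.
have := Pkanon tau' (ex_intro _ tau0 att) _ _ (mechanism_from_const tau0 tau') r r'.
rewrite (condpr_mechanism (mechanism_from_const tau0 tau')) !sum_pr_const.
rewrite (card_consistent thr) natrM.
set F := #|consistent_at _ _ _ _|; set C := #|eq_class _ _|.
have C_gt0 : (0 < C)%N by apply/card_gt0P; exists r'; rewrite finset.inE.
have -> : (F%:R / N) / (C%:R * F%:R / N) = (C%:R : R)^-1.
  by field; rewrite !pnatr_eq0 -!lt0n F_gt0 C_gt0 N_gt0.
by rewrite lef_pV2 ?posrE ?ltr0n // ler_nat.
Qed.

End DeterministicMechanism.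

Theorem corollary3 (R : realType) (d : measure_display)
    (Omega : measurableType d) (P : probability Omega R)
    (Rr Vv Rr' Vv' : finType)
    (Pi : Omega -> {ffun Rr -> Rr'})
    (Delta : Omega -> {ffun {ffun Rr -> Vv} -> {ffun Rr -> Vv'}})
    (k : nat) :
  #|Rr| = #|Rr'| -> (0 < k)%N ->
  privacy_mechanism P Pi Delta -> deterministic P Delta ->
  (k_anonymization P Pi Delta k <-> Pk_anonymization P Pi Delta k).
Proof.
move=> _ k_gt0 mechP detP.
have /boolp.choice[h Delta_h] : forall tau, exists t, P [set w | Delta w tau = t] = 1%E.
  by move=> tau; have [t [Dt _]] := detP tau; exists t.
split; [exact: Pk_anonymization_of_k | exact: k_anonymization_of_Pk].
Qed.
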